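(* If $d_1-p_1\le d_2-p_2\le\cdots\le d_n-p_n$, then first-fit satisfies $FF(I)<2\,OPT(I)$ for every such instance $I$ with $OPT(I)\ge2$ (and $FF(I)=1$ when $OPT(I)=1$); in particular first-fit is a 2-approximation on this class. The bound is tight: for every integer $k\ge1$, the instance with $3k+1$ jobs $a_1,\dots,a_k$ with $(p,d)=(k,2k)$, $b_1,\dots,b_k$ with $(p,d)=(1,k+1)$, $c_1,\dots,c_{k+1}$ with $(p,d)=(k+1,2k+1)$, in the fixed order $a_1,b_1,\dots,a_k,b_k,c_1,\dots,c_{k+1}$ (all slacks equal $k$), has $OPT(I)=k+1$ and $FF(I)=2k+1$.
   Context: Fixed order scheduling with deadlines: there are jobs $J=\{1,\dots,n\}$, each job $j$ having a processing time $p_j\in\mathbb{N}$, $p_j>0$, and a deadline $d_j\in\mathbb{N}$ with $d_j\ge p_j$; the slack of job $j$ is $d_j-p_j$. All jobs are released at time $0$; job $j$ precedes job $k$ in the fixed order iff $j<k$. A schedule $\tau:J\to\{1,\dots,n\}$ assigns jobs to identical machines; each machine processes its jobs in the fixed order from time $0$ without idle time or preemption, so job $j$ completes at $\sum_{k\le j,\tau(k)=\tau(j)}p_k$; it is feasible if every job completes by its deadline. $OPT(I)$ is the minimum number of machines used by a feasible schedule. First-fit (FF): machines indexed $1,2,\dots$; process jobs in the fixed order and assign each job $j$ to the smallest-index machine whose current load (sum of processing times already assigned) plus $p_j$ is at most $d_j$; $FF(I)$ is the number of nonempty machines. *)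

From mathcomp Require Import all_boot.
Set Implicit Arguments. Unset Strict Implicit. Unset Printing Implicit Defensive.

(* Jobs are 'I_n, in the fixed order 0 < 1 < ... < n-1; machines are 'I_n. *)

Definition completion n (p : 'I_n -> nat) (tau : 'I_n -> 'I_n) (j : 'I_n) : nat :=
  \sum_(k < n | (k <= j) && (tau k == tau j)) p k.

Definition feasible n (p d : 'I_n -> nat) (tau : {ffun 'I_n -> 'I_n}) : bool :=
  [forall j, completion p tau j <= d j].

Definition machines_used n (tau : {ffun 'I_n -> 'I_n}) : nat :=
  #|[set tau j | j in 'I_n]|.

(* OPT: minimum number of machines over feasible schedules
   (n is an upper bound, attained by one-job-per-machine when d_j >= p_j). *)
Definition OPT n (p d : 'I_n -> nat) : nat :=
  \big[minn/n]_(tau : {ffun 'I_n -> 'I_n} | feasible p d tau) machines_used tau.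

(* First fit: loads is the list of current machine loads (machine 1 first).
   Job (pj,dj) goes to the first machine with load + pj <= dj, or a new one. *)
Definition ff_step (loads : seq nat) (pj dj : nat) : seq nat :=
  let i := find (fun l => l + pj <= dj) loads in
  if i < size loads then set_nth 0 loads i (nth 0 loads i + pj)
  else rcons loads pj.

Definition ff_loads n (p d : 'I_n -> nat) : seq nat :=
  foldl (fun loads j => ff_step loads (p j) (d j)) [::] (enum 'I_n).

Definition FF n (p d : 'I_n -> nat) : nat := size (ff_loads p d).

(* Tight instance with 3k+1 jobs: a_1,b_1,...,a_k,b_k,c_1,...,c_{k+1}. *)
Definition tight_p (k j : nat) : nat :=
  if j < 2 * k then (if ~~ odd j then k else 1) else k.+1.
Definition tight_d (k j : nat) : nat :=
  if j < 2 * k then (if ~~ odd j then 2 * k else k.+1) else 2 * k + 1.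

(* Let m = FF(I) and let o be the job for which first fit opens its last machine; put
   s = d_o - p_o.  When o arrives, each of the m - 1 earlier first-fit machines already carries
   load > s from jobs preceding o.  Fix an optimal schedule with q machines and call a job i <= o
   last if no later job up to o shares its machine: there are at most q last jobs, o among them.
   Because slacks increase along the order, the jobs preceding the last job of an optimal machine
   have total processing time at most its slack <= s, so all non-last jobs together weigh at most
   q s.  At most q - 1 of the earlier first-fit machines contain a last job before o; each of the
   others carries load > s made of non-last jobs only, so there are fewer than q of them.  Hence
   m - 1 <= 2 q - 2.

   In the tight instance first fit packs each pair a_i, b_i on a fresh machine, leaving load k + 1,
   and then opens a new machine for every c_j; the optimum puts a_t and c_t on machine t and all
   b's with c_(k+1) on one more machine, while no two c's fit together (2k + 2 > 2k + 1). *)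

From mathcomp Require Import all_boot zify.
Set Implicit Arguments. Unset Strict Implicit. Unset Printing Implicit Defensive.

Lemma eq_bigl_in (R : Type) (idx : R) (op : R -> R -> R) (I : eqType) (r : seq I)
    (P1 P2 : pred I) (F : I -> R) :
  {in r, P1 =1 P2} -> \big[op/idx]_(i <- r | P1 i) F i = \big[op/idx]_(i <- r | P2 i) F i.
Proof.
move=> eqP12; rewrite big_seq_cond [RHS]big_seq_cond; apply: eq_bigl => i.
by case: (boolP (i \in r)) => //= /eqP12 ->.
Qed.

Lemma leq_sum_fibers (I : finType) M (a : I -> nat) (R : pred 'I_M)
    (P : 'I_M -> pred I) (Q : pred I) (F : I -> nat) :
  (forall (k : 'I_M) i, a i = k -> R k -> P k i -> Q i) ->
  \sum_(k < M | R k) \sum_(i | (a i == k) && P k i) F i <= \sum_(i | Q i) F i.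
Proof.
move=> fiberQ; rewrite (exchange_big_dep Q) => [|k i Rk /andP [/eqP ai_k]]; last exact: fiberQ.
apply: leq_sum => i _; rewrite big_const iter_addn_0 -[leqRHS]muln1 leq_mul2l.
apply/orP; right; apply/card_le1_eqP => k k' /and3P [_ /eqP ai_k _] /and3P [_ /eqP ai_k' _].
by apply: val_inj; rewrite /= -ai_k -ai_k'.
Qed.

Lemma foldl_map (T U R : Type) (f : R -> U -> R) (h : T -> U) (z : R) (s : seq T) :
  foldl f z (map h s) = foldl (fun z x => f z (h x)) z s.
Proof. by elim: s z => //= x s IH z; rewrite IH. Qed.

Lemma set_nth_rcons_size (T : Type) (x0 : T) (s : seq T) x y :
  set_nth x0 (rcons s x) (size s) y = rcons s y.
Proof. by elim: s => //= a s ->. Qed.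

Section FirstFitStep.
Variables (pj dj : nat) (loads : seq nat).

Let fit := find (fun l => l + pj <= dj) loads.

Lemma size_ff_step : size (ff_step loads pj dj) = maxn fit.+1 (size loads).
Proof.
rewrite /ff_step -/fit; case: ltnP => fit_lt; first by rewrite size_set_nth; lia.
by rewrite size_rcons; have := find_size (fun l => l + pj <= dj) loads; lia.
Qed.

Lemma nth_ff_step k :
  nth 0 (ff_step loads pj dj) k = nth 0 loads k + (if k == fit then pj else 0).
Proof.
rewrite /ff_step -/fit; case: ltnP => fit_lt.
  by rewrite nth_set_nth /=; case: eqP => [->|]; rewrite ?addn0.
have fit_eq : fit = size loads by have := find_size (fun l => l + pj <= dj) loads; lia.
rewrite nth_rcons fit_eq; case: ltngtP => [|k_gt|->]; rewrite ?addn0 //.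
  by rewrite nth_default ?add0n //; lia.
by rewrite nth_default.
Qed.

End FirstFitStep.

Section FirstFitAssignment.
Variables (n : nat) (p d : 'I_n -> nat).
Hypothesis p_le_d : forall j, p j <= d j.

Definition ff_assign_step (st : seq nat * ('I_n -> nat)) (j : 'I_n) :=
  (ff_step st.1 (p j) (d j),
   fun i => if i == j then find (fun l => l + p j <= d j) st.1 else st.2 i).

Definition ff_assign (s : seq 'I_n) := foldl ff_assign_step ([::], fun _ => 0) s.

Lemma ff_assign_loads s :
  (ff_assign s).1 = foldl (fun loads j => ff_step loads (p j) (d j)) [::] s.
Proof.
rewrite /ff_assign; elim/last_ind: s => [|s x IH] //.
by rewrite !foldl_rcons /= IH.
Qed.

(* [mach i] is the first-fit machine of job [i]; machine [k] was opened by a job [o] that fit on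
   no earlier machine. *)
Record ff_invariant (s : seq 'I_n) (loads : seq nat) (mach : 'I_n -> nat) : Prop := {
  ff_load_sum : forall k, nth 0 loads k = \sum_(i <- s | mach i == k) p i;
  ff_opener : forall k, k < size loads -> exists2 o, o \in s &
    forall k', k' < k -> d o - p o < \sum_(i <- s | (mach i == k') && (i < o)) p i }.

Lemma ff_invariant_rcons (s : seq 'I_n) (x : 'I_n) (st : seq nat * ('I_n -> nat)) :
  {in s, forall i : 'I_n, i < x} -> ff_invariant s st.1 st.2 ->
  ff_invariant (rcons s x) (ff_assign_step st x).1 (ff_assign_step st x).2.
Proof.
case: st => loads mach s_lt_x [/= load_sum opener]; rewrite /ff_assign_step /=.
set fit := find _ loads.
set mach' := fun i => if i == x then fit else mach i.
have mach'_s P : \sum_(i <- s | P (mach' i) i) p i = \sum_(i <- s | P (mach i) i) p i.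
  by apply: eq_bigl_in => i i_s; rewrite /mach' ifN // neq_ltn s_lt_x.
split=> [k | k].
  by rewrite nth_ff_step big_rcons /= (mach'_s (fun m _ => m == k)) load_sum /mach' eqxx eq_sym.
rewrite size_ff_step; case: (ltnP k (size loads)) => [k_lt _ | k_ge k_lt].
  have [o o_s o_opens] := opener k k_lt.
  exists o => [|k' k'_lt]; first by rewrite mem_rcons inE o_s orbT.
  have x_o : (x < o) = false by rewrite ltnNge ltnW ?s_lt_x.
  by rewrite big_rcons /= x_o andbF addn0 (mach'_s (fun m i => (m == k') && (i < o))) o_opens.
have k_fit : k = fit by have := find_size (fun l => l + p x <= d x) loads; lia.
exists x => [|k' k'_lt]; first by rewrite mem_rcons mem_head.
rewrite big_rcons /= ltnn andbF addn0 (mach'_s (fun m i => (m == k') && (i < x))).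
rewrite (eq_bigl_in _ _ (P2 := fun i => mach i == k')) => [|i i_s].
  have := before_find 0 (_ : k' < fit); rewrite -k_fit -load_sum => /(_ k'_lt).
  by have := p_le_d x; lia.
by rewrite /= s_lt_x ?andbT.
Qed.

Lemma ff_invariant_sorted (s : seq 'I_n) :
  pairwise (fun i j : 'I_n => i < j) s -> ff_invariant s (ff_assign s).1 (ff_assign s).2.
Proof.
elim/last_ind: s => [_ | s x IH]; first by split=> //= k; rewrite nth_nil big_nil.
rewrite pairwise_rcons => /andP [/allP s_lt_x /IH inv_s].
by rewrite /ff_assign foldl_rcons; apply: ff_invariant_rcons.
Qed.

Lemma ff_invariant_enum :
  ff_invariant (enum 'I_n) (ff_assign (enum 'I_n)).1 (ff_assign (enum 'I_n)).2.
Proof.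
apply: ff_invariant_sorted; rewrite -(pairwise_map val ltn) val_enum_ord.
by rewrite -sorted_pairwise ?iota_ltn_sorted //; apply: ltn_trans.
Qed.

End FirstFitAssignment.

Lemma FF_gt0 n (p d : 'I_n -> nat) : 0 < n -> 0 < FF p d.
Proof.
move=> n_gt0; rewrite /FF /ff_loads.
case/lastP: (enum 'I_n) (size_enum_ord n) => [/= n0|s x _]; first by rewrite -n0 in n_gt0.
by rewrite foldl_rcons size_ff_step leq_max.
Qed.

Definition nonlast_upto n (tau : {ffun 'I_n -> 'I_n}) (j i : 'I_n) : bool :=
  [exists i' : 'I_n, [&& i < i', i' <= j & tau i' == tau i]].

Section OptimalSchedule.
Variables (n : nat) (p d : 'I_n -> nat) (tau : {ffun 'I_n -> 'I_n}).

Lemma card_last_lt (j : 'I_n) :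
  #|[set i : 'I_n | (i < j) && ~~ nonlast_upto tau j i]| < machines_used tau.
Proof.
set L := [set i | _].
have tau_inj : {in L &, injective tau}.
  have last_neq a b : a \in L -> b \in L -> a < b -> tau a != tau b.
    rewrite !inE => /andP [_ a_last] /andP [b_lt_j _] a_lt_b.
    apply: contra a_last => tau_ab; apply/existsP; exists b.
    by rewrite a_lt_b ltnW //= eq_sym.
  move=> a b aL bL tau_ab; case: (ltngtP a b) => [a_lt_b | b_lt_a | /val_inj //].
    by case/eqP: (last_neq a b aL bL a_lt_b).
  by case/eqP: (last_neq b a bL aL b_lt_a).
rewrite -(card_in_imset tau_inj) /machines_used; apply: proper_card.
apply/properP; split; first by apply/subsetP => _ /imsetP [i _ ->]; apply: imset_f.
exists (tau j); first exact: imset_f.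
apply/imsetP => -[i]; rewrite inE => /andP [i_lt_j i_last] tau_ji.
by case/negP: i_last; apply/existsP; exists j; rewrite i_lt_j leqnn tau_ji eqxx.
Qed.

Hypothesis slack_mono : forall i k : 'I_n, i <= k -> d i - p i <= d k - p k.
Hypothesis tau_feasible : feasible p d tau.

Lemma sum_before_le_slack (l : 'I_n) :
  \sum_(i : 'I_n | (i < l) && (tau i == tau l)) p i <= d l - p l.
Proof.
have := forallP tau_feasible l; rewrite /completion (bigD1 l) ?leqnn ?eqxx //=.
rewrite (eq_bigl (fun i : 'I_n => (i < l) && (tau i == tau l))) => [|i]; first lia.
by rewrite ltn_neqAle val_eqE; case: (i == l); rewrite /= ?andbF ?andbT.
Qed.

Lemma sum_nonlast_le (j : 'I_n) :
  \sum_(i | nonlast_upto tau j i) p i <= machines_used tau * (d j - p j).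
Proof.
rewrite (partition_big tau (mem [set tau i | i in 'I_n])) => [|i _]; last exact: imset_f.
rewrite /machines_used -sum_nat_const; apply: leq_sum => m _.
case: (pickP [pred i | nonlast_upto tau j i && (tau i == m)]) => [i0 | none]; last first.
  by rewrite big_pred0.
case/andP=> /existsP [i' /and3P [i0_lt i'_le tau_i']] /eqP tau_i0.
have on_m : (i0 <= j) && (tau i0 == m) by rewrite tau_i0 eqxx andbT; lia.
have [l /andP [l_le_j /eqP tau_l] l_max] :=
  arg_maxnP (P := fun i : 'I_n => (i <= j) && (tau i == m)) (fun i => i : nat) on_m.
apply: leq_trans (leq_trans (sum_before_le_slack l) (slack_mono l_le_j)).
apply: (sub_le_big leqnn (fun x y => leq_addr y x)) => i /andP [/existsP [k]].
move=> /and3P [i_lt_k k_le_j /eqP tau_k] /eqP tau_i.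
have : k <= l by apply: l_max; rewrite k_le_j tau_k tau_i eqxx.
by rewrite tau_i tau_l eqxx andbT; lia.
Qed.

Variables (mach : 'I_n -> nat) (M : nat) (j : 'I_n).
Hypothesis loaded_before_j :
  forall k, k < M -> d j - p j < \sum_(i | (mach i == k) && (i < j)) p i.

Let last_before := [set i : 'I_n | (i < j) && ~~ nonlast_upto tau j i].
Let hit_machines := [set k : 'I_M | [exists i, (mach i == k) && (i \in last_before)]].

Lemma card_hit_machines_lt : #|hit_machines| < machines_used tau.
Proof.
apply: leq_ltn_trans (card_last_lt j); rewrite -!sum1_card.
apply: leq_trans (leq_sum_fibers (a := mach) (P := fun _ i => i \in last_before) _ _) => //.
apply: leq_sum => k; rewrite inE => /existsP [i /andP [mach_i i_last]].
by rewrite (bigD1 i) ?mach_i.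
Qed.

Lemma card_unhit_machines_lt : #|~: hit_machines| < machines_used tau.
Proof.
have q_gt0 : 0 < machines_used tau by apply: leq_ltn_trans (card_last_lt j).
have slack_lt : machines_used tau * (d j - p j) < machines_used tau * (d j - p j).+1.
  by rewrite ltn_pmul2l.
rewrite -(ltn_pmul2r (ltn0Sn (d j - p j))); apply: leq_ltn_trans slack_lt.
apply: leq_trans (sum_nonlast_le j); rewrite -sum_nat_const.
apply: leq_trans (leq_sum_fibers (a := mach) (R := mem (~: hit_machines))
                                  (P := fun _ i => i < j) _ _).
  by apply: leq_sum => k _; apply: loaded_before_j.
move=> k i mach_i; rewrite /= !inE => k_unhit i_lt_j; apply: contraNT k_unhit => i_last.
by apply/existsP; exists i; rewrite mach_i eqxx inE i_lt_j.
Qed.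

Lemma machines_lt_twice : M.+1 < 2 * machines_used tau.
Proof.
have := cardsC hit_machines; rewrite card_ord.
by have := card_hit_machines_lt; have := card_unhit_machines_lt; lia.
Qed.

End OptimalSchedule.

Lemma FF_lt_twice_machines n (p d : 'I_n -> nat) (tau : {ffun 'I_n -> 'I_n}) :
  0 < n -> (forall j, p j <= d j) ->
  (forall i k : 'I_n, i <= k -> d i - p i <= d k - p k) -> feasible p d tau ->
  FF p d < 2 * machines_used tau.
Proof.
move=> n_gt0 p_le_d slack_mono tau_feasible.
have [_ opener] := ff_invariant_enum p_le_d.
have FF_gt0 := FF_gt0 p d n_gt0.
have [|o _ o_opens] := opener (FF p d).-1; first by rewrite ff_assign_loads prednK.
rewrite -(prednK FF_gt0); apply: (machines_lt_twice slack_mono tau_feasible (j := o)).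
by move=> k /o_opens; rewrite big_enum_cond; apply.
Qed.

Lemma feasible_id n (p d : 'I_n -> nat) : (forall j, p j <= d j) -> feasible p d [ffun j => j].
Proof.
move=> p_le_d; apply/forallP => j; rewrite /completion (big_pred1 j) => [|i]; first exact: p_le_d.
by rewrite !ffunE /=; case: eqP => [->|]; rewrite ?leqnn ?andbF.
Qed.

Lemma machines_used_id n : machines_used [ffun j : 'I_n => j] = n.
Proof.
rewrite /machines_used (eq_imset (g := id)) => [|j]; last by rewrite ffunE.
by rewrite card_imset ?card_ord.
Qed.

Lemma OPT_schedule n (p d : 'I_n -> nat) : (forall j, p j <= d j) ->
  exists2 tau, feasible p d tau & machines_used tau = OPT p d.
Proof.
move=> p_le_d.
apply: (big_ind (fun m => exists2 tau, feasible p d tau & machines_used tau = m)).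
- by exists [ffun j => j]; rewrite ?feasible_id ?machines_used_id.
- move=> x y [tx tx_f <-] [ty ty_f <-].
  by rewrite /minn; case: ifP => _; [exists tx | exists ty].
- by move=> tau tau_f; exists tau.
Qed.

Lemma OPT_le_jobs n (p d : 'I_n -> nat) : OPT p d <= n.
Proof.
apply: (big_ind (fun m => m <= n)) => // [x y x_le _ | tau _]; first by rewrite geq_min x_le.
by rewrite /machines_used -[leqRHS]card_ord max_card.
Qed.

Lemma OPT_le_machines_used n (p d : 'I_n -> nat) (tau : {ffun 'I_n -> 'I_n}) :
  feasible p d tau -> OPT p d <= machines_used tau.
Proof.
rewrite /OPT => tau_feasible; have := mem_index_enum tau.
elim: (index_enum _) => // t r IH; rewrite inE big_cons => /predU1P [<- | tau_r].
  by rewrite tau_feasible geq_minl.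
by case: ifP => _; [apply: leq_trans (geq_minr _ _) (IH tau_r) | apply: IH].
Qed.

Lemma FF_lt_twice_OPT n (p d : 'I_n -> nat) :
  (forall j, p j <= d j) -> (forall i j : 'I_n, i <= j -> d i - p i <= d j - p j) ->
  0 < OPT p d -> 0 < FF p d < 2 * OPT p d.
Proof.
move=> p_le_d slack_mono OPT_gt0; have n_gt0 := leq_trans OPT_gt0 (OPT_le_jobs p d).
have [tau tau_feasible <-] := OPT_schedule p_le_d.
by rewrite FF_gt0 //=; apply: FF_lt_twice_machines.
Qed.




Ltac case_ifs :=
  repeat match goal with
  | |- context [odd ?x] => have := modn2 x; case: (odd x) => /= ?
  | |- context [if ?x < ?y then _ else _] => case: (ltnP x y) => ?
  | |- context [if ?b then _ else _] => case: (boolP b) => ?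
  end; lia.

Lemma sum_indicator_eq N a c :
  \sum_(0 <= i < N) (if i == a then c else 0) = if a < N then c else 0.
Proof.
elim: N => [|N IH]; first by rewrite big_geq.
by rewrite big_nat_recr //= IH; case_ifs.
Qed.

Lemma sum_indicator_odd N m :
  \sum_(0 <= i < N) (if odd i && (i < m) then 1 else 0) = minn N m %/ 2.
Proof.
elim: N => [|N IH]; first by rewrite big_geq // min0n div0n.
rewrite big_nat_recr //= IH; have := modn2 N.
by case: (odd N); case: (ltnP N m) => /=; lia.
Qed.

Section TightInstance.
Variable k : nat.

Definition tight_step (loads : seq nat) (j : nat) := ff_step loads (tight_p k j) (tight_d k j).

Lemma ff_tight_pairs i : i <= k -> foldl tight_step [::] (iota 0 (2 * i)) = nseq i k.+1.
Proof.
elim: i => [|i IH] i_le_k //.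
rewrite (_ : 2 * i.+1 = 2 * i + 2); last lia.
rewrite iotaD foldl_cat IH; last lia.
have odd_2i : odd (2 * i) = false by rewrite mul2n odd_double.
have a_lt : 2 * i < 2 * k by lia.
have b_lt : (2 * i).+1 < 2 * k by lia.
have [p_a d_a] : tight_p k (2 * i) = k /\ tight_d k (2 * i) = 2 * k.
  by rewrite /tight_p /tight_d odd_2i a_lt.
have [p_b d_b] : tight_p k (2 * i).+1 = 1 /\ tight_d k (2 * i).+1 = k.+1.
  by rewrite /tight_p /tight_d /= odd_2i b_lt.
rewrite /= add0n /tight_step p_a d_a p_b d_b /ff_step.
have -> : find (fun l => l + k <= 2 * k) (nseq i k.+1) = i.
  by rewrite find_nseq (_ : k.+1 + k <= 2 * k = false) ?mul1n //; lia.
rewrite size_nseq ltnn.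
have -> : find (fun l => l + 1 <= k.+1) (rcons (nseq i k.+1) k) = i.
  rewrite -cats1 find_cat has_nseq size_nseq /= ifF; last lia.
  by rewrite ifT ?addn0 //; lia.
rewrite size_rcons size_nseq ltnSn nth_rcons size_nseq ltnn eqxx.
by rewrite addn1 -{2}(size_nseq i k.+1) set_nth_rcons_size -cats1 -(nseqD i 1) addn1.
Qed.

Lemma ff_tight_tail (s : seq nat) r : {in s, forall x, 2 * k <= x} ->
  foldl tight_step (nseq r k.+1) s = nseq (r + size s) k.+1.
Proof.
elim: s r => [|x s IH] r s_ge /=; first by rewrite addn0.
have x_ge : 2 * k <= x by apply: s_ge; rewrite mem_head.
have -> : tight_step (nseq r k.+1) x = nseq r.+1 k.+1.
  have x_late : (x < 2 * k) = false by lia.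
  rewrite /tight_step /tight_p /tight_d x_late /ff_step find_nseq.
  rewrite (_ : k.+1 + k.+1 <= 2 * k + 1 = false) ?mul1n ?size_nseq ?ltnn; last lia.
  by rewrite -cats1 -(nseqD r 1) addn1.
by rewrite IH ?addSnnS // => y y_s; apply: s_ge; rewrite inE y_s orbT.
Qed.

Lemma FF_tight :
  FF (fun j : 'I_(3 * k + 1) => tight_p k j) (fun j => tight_d k j) = 2 * k + 1.
Proof.
rewrite /FF /ff_loads -(foldl_map tight_step) val_enum_ord.
rewrite (_ : 3 * k + 1 = 2 * k + (k + 1)); last lia.
rewrite iotaD foldl_cat ff_tight_pairs //.
rewrite ff_tight_tail ?size_iota ?size_nseq; first lia.
by move=> x; rewrite mem_iota; lia.
Qed.

(* Jobs 2t, 2t + 1 and 2k + t are a_(t+1), b_(t+1) and c_(t+1); a_(t+1) and c_(t+1) go to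
   machine t, all b's and c_(k+1) to machine k. *)
Definition tight_machine (j : nat) : nat :=
  if j < 2 * k then (if odd j then k else j %/ 2) else j - 2 * k.

Lemma tight_machine_le j : j < 3 * k + 1 -> tight_machine j <= k.
Proof. by rewrite /tight_machine; case: ifP => j_lt; first case: (odd j); lia. Qed.

Lemma tight_machine_lt j : j < 3 * k + 1 -> tight_machine j < 3 * k + 1.
Proof. by move=> j_lt; have := tight_machine_le j_lt; lia. Qed.

Definition tight_schedule : {ffun 'I_(3 * k + 1) -> 'I_(3 * k + 1)} :=
  [ffun j => Ordinal (tight_machine_lt (ltn_ord j))].

Lemma machines_used_tight_schedule : machines_used tight_schedule <= k + 1.
Proof.
have k1_le : k + 1 <= 3 * k + 1 by lia.
rewrite /machines_used -[k + 1]card_ord.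
apply: leq_trans (leq_imset_card (widen_ord k1_le) 'I_(k + 1)).
apply/subset_leq_card/subsetP => _ /imsetP [j _ ->].
have j_le : tight_machine j < k + 1 by have := tight_machine_le (ltn_ord j); lia.
by apply/imsetP; exists (Ordinal j_le) => //; apply: val_inj; rewrite /= ffunE.
Qed.

Lemma completion_tight_schedule (j : 'I_(3 * k + 1)) :
  completion (fun j : 'I_(3 * k + 1) => tight_p k j) tight_schedule j =
  \sum_(0 <= i < 3 * k + 1)
     (if (i <= j) && (tight_machine i == tight_machine j) then tight_p k i else 0).
Proof.
rewrite /completion big_mkcond big_mkord; apply: eq_bigr => i _.
by rewrite !ffunE -val_eqE.
Qed.

Lemma tight_schedule_feasible :
  feasible (fun j : 'I_(3 * k + 1) => tight_p k j) (fun j => tight_d k j) tight_schedule.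
Proof.
apply/forallP => j; rewrite completion_tight_schedule /=.
have := ltn_ord j; move: (nat_of_ord j) => J J_lt.
pose load i := if (i <= J) && (tight_machine i == tight_machine J) then tight_p k i else 0.
rewrite (eq_bigr load) //.
suff [b load_le sum_le] : exists2 b : nat -> nat,
    (forall i, i < 3 * k + 1 -> load i <= b i) & \sum_(0 <= i < 3 * k + 1) b i <= tight_d k J.
  apply: leq_trans sum_le; rewrite big_nat_cond [leqRHS]big_nat_cond.
  by apply: leq_sum => i /andP [/andP [_ i_lt] _]; apply: load_le.
rewrite /load /tight_machine /tight_p /tight_d.
case: (ltnP J (2 * k)) => J_2k; [case: (boolP (odd J)) => J_odd | case: (ltnP J (3 * k)) => J_3k].
- by exists (fun i => if odd i && (i < 2 * k) then 1 else 0) => [i _|];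
    rewrite ?sum_indicator_odd; case_ifs.
- by exists (fun i => if i == J then k else 0) => [i _|]; rewrite ?sum_indicator_eq; case_ifs.
- by exists (fun i => (if i == 2 * (J - 2 * k) then k else 0) + (if i == J then k.+1 else 0))
    => [i _|]; rewrite ?big_split /= ?sum_indicator_eq; case_ifs.
- by exists (fun i => (if odd i && (i < 2 * k) then 1 else 0) + (if i == J then k.+1 else 0))
    => [i _|]; rewrite ?big_split /= ?sum_indicator_odd ?sum_indicator_eq; case_ifs.
Qed.

Lemma machines_used_tight_ge (tau : {ffun 'I_(3 * k + 1) -> 'I_(3 * k + 1)}) :
  feasible (fun j : 'I_(3 * k + 1) => tight_p k j) (fun j => tight_d k j) tau ->
  k + 1 <= machines_used tau.
Proof.
move=> tau_feasible.
have c_lt (t : 'I_(k + 1)) : 2 * k + t < 3 * k + 1 by have := ltn_ord t; lia.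
pose c t := Ordinal (c_lt t).
have p_c t : tight_p k (c t) = k.+1 by rewrite /tight_p /= ifF //; lia.
have c_conflict (t t' : 'I_(k + 1)) : t < t' -> tau (c t) != tau (c t').
  move=> t_lt; apply/eqP => tau_tt'; have := forallP tau_feasible (c t').
  rewrite /completion (bigD1 (c t')) ?leqnn ?eqxx //= (bigD1 (c t)) /=; last first.
    by rewrite tau_tt' eqxx andbT -val_eqE /=; lia.
  by rewrite !p_c /tight_d /= ifF; lia.
have tau_c_inj : injective (fun t => tau (c t)).
  move=> t t' /eqP; case: (ltngtP t t') => [t_lt | t_gt | /val_inj //].
    by rewrite (negbTE (c_conflict _ _ t_lt)).
  by rewrite eq_sym (negbTE (c_conflict _ _ t_gt)).
rewrite -[k + 1]card_ord -(card_imset _ tau_c_inj).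
by apply/subset_leq_card/subsetP => _ /imsetP [t _ ->]; apply: imset_f.
Qed.

Lemma OPT_tight :
  OPT (fun j : 'I_(3 * k + 1) => tight_p k j) (fun j => tight_d k j) = k + 1.
Proof.
apply/eqP; rewrite eqn_leq; apply/andP; split.
  exact: leq_trans (OPT_le_machines_used tight_schedule_feasible) machines_used_tight_schedule.
apply: (big_ind (fun m => k + 1 <= m)) => [|x y x_ge y_ge|]; first lia.
  by rewrite leq_min x_ge.
exact: machines_used_tight_ge.
Qed.

End TightInstance.

Theorem mainTheorem6 :
  (forall (n : nat) (p d : 'I_n -> nat),
     (forall j, 0 < p j) ->
     (forall j, p j <= d j) ->
     (forall i j : 'I_n, i <= j -> d i - p i <= d j - p j) ->
     (2 <= OPT p d -> FF p d < 2 * OPT p d) /\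
     (OPT p d = 1 -> FF p d = 1)) /\
  (forall k : nat, 1 <= k ->
     OPT (fun j : 'I_(3 * k + 1) => tight_p k j) (fun j => tight_d k j) = k + 1 /\
     FF (fun j : 'I_(3 * k + 1) => tight_p k j) (fun j => tight_d k j) = 2 * k + 1).
Proof.
split=> [n p d _ p_le_d slack_mono | k _]; last by rewrite OPT_tight FF_tight.
split=> [OPT_ge2 | OPT1].
  by have /andP [] := FF_lt_twice_OPT p_le_d slack_mono (ltnW OPT_ge2).
by have := FF_lt_twice_OPT p_le_d slack_mono; rewrite OPT1 => /(_ isT); lia.
Qed.
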